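(* For every density operator $\rho$ on $\mathbb{C}^d$, $C_{\mathcal{F}}(\rho)\le N_c(\rho)/d$.
   Context: Fix the computational basis $\{|i\rangle\}_{i=0}^{d-1}$ of $\mathbb{C}^d$ as the incoherent basis. A maximally coherent state is a pure state $\frac1{\sqrt d}\sum_{i}e^{\mathrm{i}\theta_i}|i\rangle$; the quantum coherence fraction is $C_{\mathcal{F}}(\rho)=\max_{|\phi\rangle\text{ maximally coherent}}\langle\phi|\rho|\phi\rangle$. The coherence rank $R_c(|\psi\rangle)$ of a pure state is the number of nonzero coefficients of $|\psi\rangle$ in the incoherent basis. The coherence number is $N_c(\rho)=\min_{\{p_i,|\psi_i\rangle\}}\max_i R_c(|\psi_i\rangle)$, the minimum over all decompositions $\rho=\sum_ip_i|\psi_i\rangle\langle\psi_i|$ into pure states with $p_i>0$. *)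

From mathcomp Require Import all_boot all_order all_algebra.
From mathcomp Require Import complex.
From mathcomp Require Import boolp classical_sets reals.
Set Implicit Arguments. Unset Strict Implicit. Unset Printing Implicit Defensive.
Import Order.TTheory GRing.Theory Num.Theory.
Local Open Scope ring_scope.

Section QuantumCoherence.
Variables (R : realType) (d : nat).
Local Notation C := (R[i]).

Definition adjmx m n (A : 'M[C]_(m, n)) : 'M[C]_(n, m) := (map_mx Num.conj A)^T.

Definition braket (phi : 'cV[C]_d) (A : 'M[C]_d) (psi : 'cV[C]_d) : C :=
  (adjmx phi *m A *m psi) 0 0.

Definition psd (A : 'M[C]_d) : Prop :=
  adjmx A = A /\ forall x : 'cV[C]_d, 0 <= braket x A x.

Definition density (rho : 'M[C]_d) : Prop := psd rho /\ \tr rho = 1.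

Definition pure_state (psi : 'cV[C]_d) : Prop := braket psi 1%:M psi = 1.

(* maximally coherent state  (1/sqrt d) sum_i e^{i theta_i} |i> ;
   the phases e^{i theta_i} are exactly the complex numbers of modulus 1 *)
Definition max_coherent (phi : 'cV[C]_d) : Prop :=
  exists u : 'I_d -> C, (forall i, `|u i| = 1) /\
    phi = \col_i (u i / sqrtC (d%:R : C)).

(* quantum coherence fraction: max over maximally coherent states of <phi|rho|phi>
   (a real number since rho is Hermitian; we take its real part) *)
Definition coherence_fraction (rho : 'M[C]_d) : R :=
  sup [set x : R | exists phi, max_coherent phi /\ x = complex.Re (braket phi rho phi)].

Definition coherence_rank (psi : 'cV[C]_d) : nat := #|[set i | psi i 0 != 0]|.

Definition decomposition_with_rank_le (rho : 'M[C]_d) (n : nat) : Prop :=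
  exists (k : nat) (p : 'I_k -> C) (psi : 'I_k -> 'cV[C]_d),
    (forall j, 0 < p j) /\ (forall j, pure_state (psi j)) /\
    rho = \sum_(j < k) p j *: (psi j *m adjmx (psi j)) /\
    (\max_(j < k) coherence_rank (psi j) <= n)%N.

(* coherence number: the minimum over pure-state decompositions of the maximal
   coherence rank (defined as 0 if rho admits no decomposition, which never
   happens for a density operator) *)
Definition coherence_number (rho : 'M[C]_d) : nat :=
  match pselect (exists n, asbool (decomposition_with_rank_le rho n)) with
  | left ex => ex_minn ex
  | right _ => 0%N
  end.

End QuantumCoherence.

(* Let rho = \sum_j p_j |psi_j><psi_j| with every psi_j supported on at most n
   basis vectors.  For a maximally coherent phi, |phi_i| = 1/sqrt d, so by
   Cauchy-Schwarz on the support of psi_j,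
   |<phi|psi_j>|^2 <= (\sum_{i in supp psi_j} |psi_j i|)^2 / d <= n / d.
   Hence <phi|rho|phi> = \sum_j p_j |<phi|psi_j>|^2 <= n / d, because
   \sum_j p_j = tr rho = 1.  The spectral theorem provides some pure-state
   decomposition of rho, so the minimum N_c(rho) is attained and we may take
   n = N_c(rho). *)
From mathcomp Require Import all_boot all_order all_algebra.
From mathcomp Require Import complex spectral sesquilinear.
From mathcomp Require Import boolp reals.
Set Implicit Arguments. Unset Strict Implicit. Unset Printing Implicit Defensive.
Import Order.TTheory GRing.Theory Num.Theory.
Local Open Scope ring_scope.

Lemma sqr_sum_le_card_sum_sqr (F : numDomainType) (I : finType) (S : {pred I})
    (b : I -> F) :
  (forall i, b i \is Num.real) ->
  (\sum_(i in S) b i) ^+ 2 <= #|S|%:R * \sum_(i in S) b i ^+ 2.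
Proof.
move=> b_real; set T := \sum_(i in S) b i ^+ 2; set U := \sum_(i in S) b i.
have sum_diff_sqr : \sum_(i in S) \sum_(j in S) (b i - b j) ^+ 2
    = (#|S|%:R * T - U ^+ 2) *+ 2.
  rewrite (eq_bigr (fun i => b i ^+ 2 *+ #|S| - (b i * U) *+ 2 + T)); last first.
    move=> i _; under eq_bigr => j _ do rewrite sqrrB.
    by rewrite big_split sumrB /= sumr_const sumrMnl -mulr_sumr.
  rewrite big_split sumrB /= sumr_const !sumrMnl -mulr_suml -/T -/U.
  by rewrite mulrnBl expr2 addrAC -mulr2n mulr_natl.
have : 0 <= \sum_(i in S) \sum_(j in S) (b i - b j) ^+ 2.
  by apply: sumr_ge0 => i _; apply: sumr_ge0 => j _; rewrite -realEsqr realB.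
by rewrite sum_diff_sqr pmulrn_lge0 // subr_ge0.
Qed.

Section Coherence.
Variables (R : realType) (d : nat).
Local Notation C := (R[i]).

Lemma adjmxM m n p (A : 'M[C]_(m, n)) (B : 'M[C]_(n, p)) :
  adjmx (A *m B) = adjmx B *m adjmx A.
Proof. by rewrite /adjmx map_mxM trmx_mul. Qed.

Lemma adjmxK m n (A : 'M[C]_(m, n)) : adjmx (adjmx A) = A.
Proof. by apply/matrixP => i j; rewrite /adjmx !mxE conjCK. Qed.

Lemma adjmx_trmxC m n (A : 'M[C]_(m, n)) : adjmx A = (A ^t* )%sesqui.
Proof. by rewrite /adjmx map_trmx. Qed.

Lemma braket_sumZ (phi : 'cV[C]_d) k (p : 'I_k -> C) (M : 'I_k -> 'M[C]_d) :
  braket phi (\sum_j p j *: M j) phi = \sum_j p j * braket phi (M j) phi.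
Proof.
rewrite /braket mulmx_sumr mulmx_suml summxE; apply: eq_bigr => j _.
by rewrite -scalemxAr -scalemxAl mxE.
Qed.

Lemma braket_outer (phi psi : 'cV[C]_d) :
  braket phi (psi *m adjmx psi) phi = `|(adjmx phi *m psi) 0 0| ^+ 2.
Proof.
rewrite /braket mulmxA -(mulmxA (adjmx phi *m psi)).
rewrite -{2}(adjmxK phi) -adjmxM mxE big_ord1 normCK.
by rewrite /adjmx !mxE.
Qed.

Lemma pure_state_sum_sqr (psi : 'cV[C]_d) :
  pure_state psi -> \sum_i `|psi i 0| ^+ 2 = 1.
Proof.
rewrite /pure_state /braket mulmx1 mxE => <-.
by apply: eq_bigr => i _; rewrite normCKC /adjmx !mxE.
Qed.

Lemma mxtrace_outer_pure (psi : 'cV[C]_d) :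
  pure_state psi -> \tr (psi *m adjmx psi) = 1.
Proof. by rewrite /pure_state /braket mulmx1 mxtrace_mulC trace_mx11. Qed.

Lemma pure_state_dim_gt0 (psi : 'cV[C]_d) : pure_state psi -> (0 < d)%N.
Proof.
move/pure_state_sum_sqr; case: d psi => [|//] psi.
by rewrite big_ord0 => /eqP; rewrite eq_sym oner_eq0.
Qed.

Lemma max_coherent_overlap_le_rank (phi psi : 'cV[C]_d) :
  max_coherent phi -> pure_state psi ->
  `|(adjmx phi *m psi) 0 0| ^+ 2 <= (coherence_rank psi)%:R / d%:R.
Proof.
move=> [u [u_norm ->]] psi_pure; have d_gt0 := pure_state_dim_gt0 psi_pure.
set S := [set i | psi i 0 != 0]; set s := sqrtC (d%:R : C).
have s_gt0 : 0 < s by rewrite sqrtC_gt0 ltr0n.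
have overlap_supp : (adjmx (\col_i (u i / s)) *m psi) 0 0
    = \sum_(i in S) (u i / s)^* * psi i 0.
  rewrite mxE (bigID (mem S)) /= [X in _ + X]big1 ?addr0.
    by apply: eq_bigr => i _; rewrite /adjmx !mxE.
  by move=> i; rewrite inE negbK => /eqP ->; rewrite mulr0.
have overlap_le : `|(adjmx (\col_i (u i / s)) *m psi) 0 0|
    <= s^-1 * \sum_(i in S) `|psi i 0|.
  rewrite overlap_supp mulr_sumr; apply: le_trans (ler_norm_sum _ _ _) _.
  apply: ler_sum => i _.
  by rewrite normrM norm_conjC normrM u_norm mul1r normfV (gtr0_norm s_gt0).
apply: le_trans (_ : _ <= (s^-1 * \sum_(i in S) `|psi i 0|) ^+ 2) _.
  by rewrite !expr2 ler_pM.
rewrite exprMn exprVn sqrtCK mulrC ler_pdivrMr ?ltr0n // mulfVK ?pnatr_eq0 -?lt0n //.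
apply: le_trans (sqr_sum_le_card_sum_sqr _ (fun i => normr_real _)) _.
rewrite -[X in _ <= X]mulr1 ler_wpM2l // -(pure_state_sum_sqr psi_pure).
rewrite [X in _ <= X](bigID (mem S)) /= lerDl.
by apply: sumr_ge0 => i _; rewrite exprn_ge0.
Qed.

Lemma braket_le_decomposition_rank (rho : 'M[C]_d) (n : nat) (phi : 'cV[C]_d) :
  \tr rho = 1 -> decomposition_with_rank_le rho n -> max_coherent phi ->
  braket phi rho phi <= n%:R / d%:R.
Proof.
move=> tr_rho [k [p [psi [p_gt0 [psi_pure [rhoE rank_le]]]]]] phi_mc.
have sum_p : \sum_j p j = 1.
  rewrite -tr_rho rhoE raddf_sum; apply: eq_bigr => j _.
  by rewrite /= mxtraceZ mxtrace_outer_pure ?mulr1.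
rewrite rhoE braket_sumZ.
apply: le_trans (_ : _ <= \sum_j p j * (n%:R / d%:R)) _; last first.
  by rewrite -mulr_suml sum_p mul1r.
apply: ler_sum => j _; rewrite braket_outer; apply: ler_wpM2l; first exact: ltW.
apply: le_trans (max_coherent_overlap_le_rank phi_mc (psi_pure j)) _.
rewrite ler_wpM2r ?invr_ge0 ?ler0n // ler_nat.
exact: leq_trans (leq_bigmax j) rank_le.
Qed.

Lemma psd_spectral_decomposition (rho : 'M[C]_d) : psd rho ->
  exists (s : 'I_d -> C) (psi : 'I_d -> 'cV[C]_d),
    [/\ forall j, 0 <= s j, forall j, pure_state (psi j) &
        rho = \sum_(j < d) s j *: (psi j *m adjmx (psi j))].
Proof.
move=> [rho_herm rho_pos]; rewrite adjmx_trmxC in rho_herm.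
have rho_normal : rho \is normalmx by apply/normalmxP; rewrite rho_herm.
set P := spectralmx rho; set D := spectral_diag rho; set Q := (P ^t* )%sesqui.
have P_unitary : P \is unitarymx by apply: spectral_unitarymx.
have rhoE : rho = Q *m diag_mx D *m P.
  by rewrite /Q -invmx_unitary //; apply/orthomx_spectralP.
have PQ : P *m Q = 1%:M by apply/unitarymxP.
have adj_colQ i : adjmx (col i Q) = row i P.
  by apply/matrixP => a b; rewrite /adjmx !mxE conjCK.
have braket_colQ i (M : 'M[C]_d) : braket (col i Q) M (col i Q) = (P *m M *m Q) i i.
  by rewrite /braket adj_colQ -row_mul !mxE; apply: eq_bigr => k _; rewrite !mxE.
exists (fun i => D 0 i), (fun i => col i Q); split.
- move=> j; have := rho_pos (col j Q).
  by rewrite braket_colQ rhoE !mulmxA PQ mul1mx -mulmxA PQ mulmx1 mxE eqxx mulr1n.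
- by move=> j; rewrite /pure_state braket_colQ mulmx1 PQ mxE eqxx.
apply/matrixP => a b; rewrite {1}rhoE summxE mul_mx_diag mxE.
apply: eq_bigr => k _; rewrite adj_colQ !mxE big_ord1 !mxE.
by rewrite mulrCA mulrA.
Qed.

Lemma density_decomposition_exists (rho : 'M[C]_d) :
  density rho -> exists n, decomposition_with_rank_le rho n.
Proof.
move=> [/psd_spectral_decomposition [s [psi [s_ge0 psi_pure ->]]] _].
set S := [set j | 0 < s j].
pose p (j : 'I_#|S|) := s (enum_val j).
pose psiS (j : 'I_#|S|) := psi (enum_val j).
exists (\max_(j < #|S|) coherence_rank (psiS j)), #|S|, p, psiS.
split; first by move=> j; have := enum_valP j; rewrite inE.
split=> [j|]; first exact: psi_pure.
split=> //; rewrite (bigID (mem S)) /= [X in _ + X]big1 ?addr0.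
  by rewrite big_enum_val.
move=> j; rewrite inE lt_def s_ge0 andbT negbK => /eqP ->.
by rewrite scale0r.
Qed.

Lemma density_coherence_number (rho : 'M[C]_d) :
  density rho -> decomposition_with_rank_le rho (coherence_number rho).
Proof.
move=> rho_density; rewrite /coherence_number.
case: pselect => [ex|[]]; first by case: (ex_minnP ex) => m /asboolP.
by have [n ?] := density_decomposition_exists rho_density; exists n; apply/asboolP.
Qed.

Lemma coherence_fraction_le (rho : 'M[C]_d) (x : R) :
  (forall phi, max_coherent phi -> braket phi rho phi <= x%:C%C) ->
  coherence_fraction rho <= x.
Proof.
move=> braket_le; apply: ge_sup.
  pose phi0 : 'cV[C]_d := \col_i (1 / sqrtC (d%:R : C)).
  exists (complex.Re (braket phi0 rho phi0)), phi0; split => //.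
  by exists (fun=> 1); rewrite normr1.
by move=> _ [phi [phi_mc ->]]; move: (braket_le phi phi_mc); rewrite lecE => /andP[].
Qed.

End Coherence.

Theorem mainTheorem5 (R : realType) (d : nat) (rho : 'M[R[i]]_d) :
  density rho ->
  coherence_fraction rho <= (coherence_number rho)%:R / d%:R.
Proof.
move=> rho_density; apply: coherence_fraction_le => phi phi_mc.
rewrite fmorph_div !rmorph_nat.
apply: braket_le_decomposition_rank phi_mc.
- exact: rho_density.2.
- exact: density_coherence_number.
Qed.
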